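(* Let $\alpha\ge0$ and $\epsilon\ge0$, and let $P=\{p_0,p_1,\dots,p_k\}\subset\mathbb R^n$ satisfy $\|p_i-p_j\|\le\epsilon\alpha$ for all $i,j$. Then $$\mathrm{CH}\Big(\bigcup_{0\le i\le k}B(p_i;\alpha)\Big)\subseteq\bigcup_{0\le i\le k}B\Big(p_i;\alpha\sqrt{1+\tfrac{\epsilon^2}{2}}\Big).$$
   Context: $B(p;r)$ denotes the open Euclidean ball of radius $r$ centered at $p$; $\mathrm{CH}$ denotes convex hull. *)

From mathcomp Require Import all_boot all_order all_algebra.
From mathcomp Require Import reals.
Set Implicit Arguments. Unset Strict Implicit. Unset Printing Implicit Defensive.
Import Order.TTheory GRing.Theory Num.Theory.
Local Open Scope ring_scope.

Definition enorm (R : realType) (n : nat) (v : 'rV[R]_n) : R :=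
  Num.sqrt (\sum_(i < n) v ord0 i ^+ 2).

Definition oball (R : realType) (n : nat) (p : 'rV[R]_n) (r : R) : 'rV[R]_n -> Prop :=
  fun x => enorm (x - p) < r.

Definition convex_set (R : realType) (n : nat) (C : 'rV[R]_n -> Prop) : Prop :=
  forall x y (t : R), C x -> C y -> 0 <= t -> t <= 1 -> C (t *: x + (1 - t) *: y).

Definition conv_hull (R : realType) (n : nat) (S : 'rV[R]_n -> Prop) : 'rV[R]_n -> Prop :=
  fun x => forall C, convex_set C -> (forall y, S y -> C y) -> C x.

(* Replace the union of balls by the set of points at distance less than
   [alpha] from some convex combination [c = \sum_i l_i p_i] of the centres;
   this set is convex because the squared norm is.  For such a point [x],
   the weighted variance identity
     [\sum_i l_i |x - p_i|^2 = |x - c|^2 + 1/2 \sum_(i,k) l_i l_k |p_i - p_k|^2]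
   bounds the weighted mean of the [|x - p_i|^2] by
   [alpha^2 + (eps alpha)^2 / 2], so some [|x - p_i|^2] is below that bound. *)
From mathcomp Require Import all_boot all_order all_algebra.
From mathcomp Require Import reals.
From mathcomp Require Import ring lra.
Set Implicit Arguments. Unset Strict Implicit. Unset Printing Implicit Defensive.
Import Order.TTheory GRing.Theory Num.Theory.
Local Open Scope ring_scope.

Lemma convex_comb_lt (R : realDomainType) (t u v r : R) :
  0 <= t -> t <= 1 -> u < r -> v < r -> t * u + (1 - t) * v < r.
Proof.
move=> t0 t1 ltu ltv; have [-> | t_neq0] := eqVneq t 0.
  by rewrite mul0r add0r subr0 mul1r.
have t_pos : 0 < t by rewrite lt_def t_neq0.
have : t * u < t * r by rewrite ltr_pM2l.
have : (1 - t) * v <= (1 - t) * r by rewrite ler_wpM2l ?subr_ge0 // ltW.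
lra.
Qed.

Section SquaredNorm.
Variables (R : realType) (n : nat).
Implicit Types (u v : 'rV[R]_n) (r : R).

Definition sqnorm v : R := \sum_(j < n) v ord0 j ^+ 2.

Lemma sqnorm_ge0 v : 0 <= sqnorm v.
Proof. by apply: sumr_ge0 => j _; rewrite sqr_ge0. Qed.

Lemma enorm_lt v r : 0 <= r -> (enorm v < r) = (sqnorm v < r ^+ 2).
Proof.
move=> r0; rewrite /enorm -{1}(ger0_norm r0) -sqrtr_sqr !ltNge.
by rewrite ler_sqrt // sqnorm_ge0.
Qed.

Lemma enorm_le v r : 0 <= r -> (enorm v <= r) = (sqnorm v <= r ^+ 2).
Proof.
by move=> r0; rewrite /enorm -{1}(ger0_norm r0) -sqrtr_sqr ler_sqrt // sqr_ge0.
Qed.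

Lemma sqnorm_convex u v (t : R) : 0 <= t -> t <= 1 ->
  sqnorm (t *: u + (1 - t) *: v) <= t * sqnorm u + (1 - t) * sqnorm v.
Proof.
move=> t0 t1; rewrite /sqnorm !mulr_sumr -big_split /=; apply: ler_sum => j _.
rewrite !mxE.
have : 0 <= t * (1 - t) * (u ord0 j - v ord0 j) ^+ 2.
  by rewrite mulr_ge0 ?sqr_ge0 // mulr_ge0 // subr_ge0.
nra.
Qed.

End SquaredNorm.

Section Weights.
Variables (R : realDomainType) (I : finType) (l : I -> R).
Hypotheses (l_ge0 : forall i, 0 <= l i) (l_sum1 : \sum_i l i = 1).

Lemma weighted_mean_le (f : I -> R) (M : R) :
  (forall i, f i <= M) -> \sum_i l i * f i <= M.
Proof.
move=> fM; rewrite -[M]mul1r -l_sum1 mulr_suml.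
by apply: ler_sum => i _; rewrite ler_wpM2l.
Qed.

Lemma weighted_mean_ge (f : I -> R) (M : R) :
  (forall i, M <= f i) -> M <= \sum_i l i * f i.
Proof.
move=> Mf; rewrite -[M]mul1r -l_sum1 mulr_suml.
by apply: ler_sum => i _; rewrite ler_wpM2l.
Qed.

Lemma exists_lt_weighted_mean (f : I -> R) (M : R) :
  \sum_i l i * f i < M -> exists i, f i < M.
Proof.
move=> lt_mean; case: (pickP (fun i => f i < M)) => [i fi_lt | ge_f].
  by exists i.
move: lt_mean; rewrite ltNge weighted_mean_ge // => i.
by rewrite leNgt ge_f.
Qed.

Lemma weighted_sum_sqrB (a : I -> R) (b : R) :
  \sum_i l i * (b - a i) ^+ 2 =
  b ^+ 2 - 2 * b * (\sum_i l i * a i) + \sum_i l i * a i ^+ 2.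
Proof.
rewrite (eq_bigr (fun i => b ^+ 2 * l i - 2 * b * (l i * a i) + l i * a i ^+ 2));
  last by move=> i _; ring.
by rewrite big_split sumrB /= -!mulr_sumr l_sum1 mulr1.
Qed.

Lemma weighted_sum_pair_sqrB (a : I -> R) :
  \sum_i l i * \sum_k l k * (a i - a k) ^+ 2 =
  2 * (\sum_i l i * a i ^+ 2 - (\sum_i l i * a i) ^+ 2).
Proof.
under eq_bigr do rewrite weighted_sum_sqrB.
set m := \sum_i l i * a i; set s := \sum_i l i * a i ^+ 2.
rewrite (eq_bigr (fun i => l i * a i ^+ 2 - 2 * m * (l i * a i) + s * l i));
  last by move=> i _; ring.
by rewrite big_split sumrB /= -!mulr_sumr l_sum1 -/m -/s; ring.
Qed.

End Weights.

Section HullNeighbourhood.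
Variables (R : realType) (n : nat) (I : finType) (p : I -> 'rV[R]_n).

Lemma weighted_sqnorm_subr (l : I -> R) (x : 'rV[R]_n) : \sum_i l i = 1 ->
  2 * \sum_i l i * sqnorm (x - p i) =
  2 * sqnorm (x - \sum_i l i *: p i) +
  \sum_i l i * \sum_k l k * sqnorm (p i - p k).
Proof.
move=> l_sum1; rewrite /sqnorm.
have -> : \sum_i l i * \sum_(j < n) (x - p i) ord0 j ^+ 2 =
    \sum_(j < n) \sum_i l i * (x ord0 j - p i ord0 j) ^+ 2.
  rewrite [RHS]exchange_big; apply: eq_bigr => i _; rewrite mulr_sumr.
  by apply: eq_bigr => j _; rewrite !mxE.
have -> : \sum_i l i * \sum_k l k * \sum_(j < n) (p i - p k) ord0 j ^+ 2 =
    \sum_(j < n) \sum_i l i * \sum_k l k * (p i ord0 j - p k ord0 j) ^+ 2.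
  rewrite [RHS]exchange_big; apply: eq_bigr => i _; rewrite -mulr_sumr.
  congr (_ * _); rewrite [RHS]exchange_big; apply: eq_bigr => k _.
  by rewrite mulr_sumr; apply: eq_bigr => j _; rewrite !mxE.
rewrite !mulr_sumr -big_split; apply: eq_bigr => j _.
rewrite weighted_sum_sqrB // weighted_sum_pair_sqrB // !mxE summxE /=.
have -> : \sum_i (l i *: p i) ord0 j = \sum_i l i * p i ord0 j.
  by apply: eq_bigr => i _; rewrite mxE.
ring.
Qed.

Definition hull_nbhd (r : R) (y : 'rV[R]_n) : Prop :=
  exists l : I -> R, [/\ forall i, 0 <= l i, \sum_i l i = 1 &
    sqnorm (y - \sum_i l i *: p i) < r ^+ 2].

Lemma convex_hull_nbhd r : convex_set (hull_nbhd r).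
Proof.
move=> y z t [ly [ly_ge0 ly_sum1 lt_y]] [lz [lz_ge0 lz_sum1 lt_z]] t0 t1.
have t1' : 0 <= 1 - t by rewrite subr_ge0.
exists (fun i => t * ly i + (1 - t) * lz i); split.
- by move=> i; rewrite addr_ge0 // mulr_ge0.
- by rewrite big_split /= -!mulr_sumr ly_sum1 lz_sum1 !mulr1 addrC subrK.
have -> : t *: y + (1 - t) *: z - \sum_i (t * ly i + (1 - t) * lz i) *: p i =
    t *: (y - \sum_i ly i *: p i) + (1 - t) *: (z - \sum_i lz i *: p i).
  under eq_bigr do rewrite scalerDl -!scalerA.
  by rewrite big_split /= -!scaler_sumr !scalerBr opprD addrACA.
apply: le_lt_trans (sqnorm_convex _ _ t0 t1) _.
exact: convex_comb_lt.
Qed.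

Lemma oball_sub_hull_nbhd r i y : 0 <= r -> oball (p i) r y -> hull_nbhd r y.
Proof.
move=> r0; rewrite /oball enorm_lt // => lt_y.
exists (fun j => (j == i)%:R); split => [j | |]; first by rewrite ler0n.
  by rewrite (bigD1 i) //= eqxx big1 ?addr0 // => j /negbTE ->.
rewrite (bigD1 i) //= eqxx scale1r big1 ?addr0 //.
by move=> j /negbTE ->; rewrite scale0r.
Qed.

Lemma conv_hull_balls_sub r x : 0 <= r ->
  conv_hull (fun y => exists i, oball (p i) r y) x -> hull_nbhd r x.
Proof.
move=> r0; apply; first exact: convex_hull_nbhd.
by move=> y [i]; apply: oball_sub_hull_nbhd.
Qed.

End HullNeighbourhood.

Theorem proposition25 (R : realType) (n k : nat) (alpha eps : R)
    (p : 'I_k.+1 -> 'rV[R]_n) :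
  0 <= alpha -> 0 <= eps ->
  (forall i j, enorm (p i - p j) <= eps * alpha) ->
  forall x, conv_hull (fun y => exists i, oball (p i) alpha y) x ->
  exists i, oball (p i) (alpha * Num.sqrt (1 + eps ^+ 2 / 2)) x.
Proof.
move=> alpha0 eps0 close x /(conv_hull_balls_sub alpha0) [l [l_ge0 l_sum1 near_x]].
have c0 : 0 <= 1 + eps ^+ 2 / 2 by rewrite addr_ge0 ?divr_ge0 ?sqr_ge0.
set rho := alpha * Num.sqrt _.
have rho0 : 0 <= rho by rewrite mulr_ge0 ?sqrtr_ge0.
have rho2 : rho ^+ 2 = alpha ^+ 2 + (eps * alpha) ^+ 2 / 2.
  by rewrite exprMn sqr_sqrtr //; ring.
have spread : \sum_i l i * \sum_k l k * sqnorm (p i - p k) <= (eps * alpha) ^+ 2.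
  apply: weighted_mean_le => // i; apply: weighted_mean_le => // j.
  by rewrite -enorm_le ?mulr_ge0.
have mean_lt : \sum_i l i * sqnorm (x - p i) < rho ^+ 2.
  by have := weighted_sqnorm_subr p x l_sum1; rewrite rho2; lra.
have [i lt_i] := exists_lt_weighted_mean l_ge0 l_sum1 mean_lt.
by exists i; rewrite /oball enorm_lt.
Qed.
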